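(* $\mathbf{FP}\subseteq\mathbf{FPC}$: every total function $f:\mathbb Z^m\to\mathbb Z$ computable by a deterministic Turing machine in time polynomial in the total binary length of its input is computed by some well-typed CorePolyC program.
   Context: CorePolyC. Types are $\mathtt{iint},\mathtt{int},\mathtt{bool}$; $\mathsf{Int}=\{\mathtt{iint},\mathtt{int}\}$, ordered by $\mathtt{iint}\preccurlyeq\mathtt{int}$. Values are unbounded integers ($\mathbb Z$) and booleans $\#t,\#f$. Expressions: variables $x$; constants (nonempty decimal digit strings denoting natural numbers; $\mathtt{true}$, $\mathtt{false}$); operator applications $\mathtt{op}(e_1,\dots,e_m)$; parenthesized $(e)$. Operators and semantics: unary $-$ (negation); binary $+,-,/,\%$ (integer addition, subtraction, division, remainder, with division and remainder by $0$ returning $0$); $\mathtt{size}$, with $\mathtt{size}(v)=\lceil\log_2(\mathrm{abs}(v)+1)\rceil$; comparisons $\texttt{>=},\texttt{<=},\texttt{>},\texttt{<},\texttt{==},\texttt{!=}$ on integers returning booleans; boolean $\texttt{!},\texttt{\&\&},\texttt{||}$. Statements: declaration $t\ x;$; assignment $x=e;$; block $\{s_1\dots s_m\}$; conditional $\mathbf{if}(e)\ s_1\ \mathbf{else}\ s_2$; loop $\mathbf{for}(x<\mathtt{size}(e))\ s$ (loop bounds are always syntactically of the form $\mathtt{size}(e)$). A program is $\mathbf{int\ main}(\mathbf{int}\ x_1,\dots,\mathbf{int}\ x_m)\{s_1\dots s_k\ \mathbf{return}\ e;\}$. Semantics (big-step). A store $\Sigma$ is a finite partial map from variables to values; $\Sigma[x\mapsto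 v]$ is the update. $\Sigma\vdash e\Downarrow v$: a variable $x\in\mathrm{dom}\,\Sigma$ evaluates to $\Sigma(x)$, constants to their value, $\mathtt{op}(e_1,\dots,e_m)$ to $\mathtt{op}$ applied to the values of the $e_i$. $\Sigma\vdash s\Downarrow\Sigma'$: $t\ x;$ gives $\Sigma[x\mapsto 0]$ if $t\in\mathsf{Int}$ and $\Sigma[x\mapsto\#f]$ if $t=\mathtt{bool}$; $x=e;$ (with $x\in\mathrm{dom}\,\Sigma$) gives $\Sigma[x\mapsto v]$ where $\Sigma\vdash e\Downarrow v$; a sequence or block executes its statements in order threading the store (a block returns the final store); a conditional evaluates its guard to a boolean and executes the corresponding branch; $\mathbf{for}(x<e)\ s$ evaluates $e$ once to an integer $i$, sets $\Sigma_0=\Sigma$, executes $s$ from $\Sigma_j[x\mapsto j]$ obtaining $\Sigma_{j+1}$ for $j=0,\dots,i-1$, and ends in $\Sigma_i$ (i.e. in $\Sigma$ if $i\le 0$). A program on inputs $v_1,\dots,v_m$ runs its statements from the store $[x_1\mapsto v_1,\dots,x_m\mapsto v_m]$ and outputs the value of its return expression in the resulting store. Type system. A typing environment $\Gamma$ is a finite partial map from variables to types; $\ell\in\{\#t,\#f\}$ is the loop indicator. Expression typing $\Gamma,\ell\vdash e:t$: a variable $x\in\mathrm{dom}\,\Gamma$ has type $\Gamma(x)$; digit literals have type $\mathtt{iint}$, $\mathtt{true},\mathtt{false}$ have type $\mathtt{bool}$; $\texttt{!},\texttt{\&\&},\texttt{||}$ take $\mathtt{bool}$ arguments to $\mathtt{bool}$;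 comparisons take arguments with types in $\mathsf{Int}$ to $\mathtt{bool}$; $+,-,/,\%$ take arguments with types in $\mathsf{Int}$ to their supremum under $\preccurlyeq$ ($\mathtt{iint}$ iff all arguments are $\mathtt{iint}$); $\mathtt{size}$ takes only an $\mathtt{iint}$ argument, giving $\mathtt{iint}$; parentheses preserve types. Statement typing $\Gamma,\ell\vdash s:\Gamma'$: $t\ x;$ is typable iff $x\notin\mathrm{dom}\,\Gamma$ and not($\ell=\#t$ and $t=\mathtt{iint}$), giving $\Gamma[x\mapsto t]$; $x=e;$ is typable iff $x\in\mathrm{dom}\,\Gamma$, not($\ell=\#t$ and $\Gamma(x)=\mathtt{iint}$), and $\Gamma,\ell\vdash e:t$ with $t,\Gamma(x)$ both in $\mathsf{Int}$ or both $\mathtt{bool}$, giving $\Gamma$; a sequence $s_1\dots s_m$ threads $\Gamma_0=\Gamma$, $\Gamma_{i-1},\ell\vdash s_i:\Gamma_i$, giving $\Gamma_m$; a block $\{\tilde s\}$ is typable if its sequence is, giving $\Gamma$; a conditional needs a guard of type $\mathtt{bool}$ and both branches typable under $\Gamma,\ell$, giving $\Gamma$; $\mathbf{for}(x<e)\ s$ needs $\Gamma,\ell\vdash e:\mathtt{iint}$, $x\notin\mathrm{dom}\,\Gamma$, and $\Gamma[x\mapsto\mathtt{iint}],\#t\vdash s:\Gamma'$ for some $\Gamma'$, giving $\Gamma$. A program is well-typed if its statements are typable starting from $[x_1\mapsto\mathtt{int},\dots,x_m\mapsto\mathtt{int}]$ with $\ell=\#f$, ending in some $\Gamma'$, and its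 return expression has a type in $\mathsf{Int}$ under $\Gamma',\#f$. A well-typed program $p$ with $m$ inputs computes a total function $[\![p]\!]:\mathbb Z^m\to\mathbb Z$; $\mathbf{FPC}$ is the set of all such functions. $\mathbf{FP}$ is the class of total functions $\mathbb Z^m\to\mathbb Z$ ($m\ge0$) computable by a deterministic Turing machine in time polynomial in the total binary length of the input. *)

From Stdlib Require Import ZArith List.
Import ListNotations.
Open Scope Z_scope.

Inductive ty : Type := TIint | TInt | TBool.

Definition is_int (t : ty) : Prop := t = TIint \/ t = TInt.

Definition ty_sup (a b : ty) : ty :=
  match a, b with TIint, TIint => TIint | _, _ => TInt end.

Inductive op : Type :=
  | ONeg
  | OAdd | OSub | ODiv | OMod
  | OSize
  | OGe | OLe | OGt | OLt | OEq | ONe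
  | ONot | OAnd | OOr.

Definition var := nat.

Inductive expr : Type :=
  | EVar (x : var)
  | ENum (n : nat)
  | ETrue
  | EFalse
  | EOp (o : op) (es : list expr)
  | EParen (e : expr).

Inductive stmt : Type :=
  | SDecl (t : ty) (x : var)
  | SAssign (x : var) (e : expr)
  | SBlock (ss : list stmt)
  | SIf (e : expr) (s1 s2 : stmt)
  | SFor (x : var) (e : expr) (s : stmt).   (* for (x < size(e)) s *)

Record program : Type := mkProgram {
  params : list var;
  body : list stmt;
  ret : expr }.

Inductive value : Type := VInt (z : Z) | VBool (b : bool).

Definition store := var -> option value.
Definition empty_store : store := fun _ => None.
Definition upd {A : Type} (S : var -> option A) (x : var) (v : A) : var -> option A :=
  fun y => if Nat.eqb y x then Some v else S y.

Definition zsize (v : Z) : Z := Z.log2_up (Z.abs v + 1).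

(* integer division/remainder (C-style truncation), 0 when the divisor is 0 *)
Definition zdiv0 (a b : Z) : Z := if Z.eqb b 0 then 0 else Z.quot a b.
Definition zmod0 (a b : Z) : Z := if Z.eqb b 0 then 0 else Z.rem a b.

Definition op_sem (o : op) (vs : list value) : option value :=
  match o, vs with
  | ONeg, [VInt a] => Some (VInt (- a))
  | OAdd, [VInt a; VInt b] => Some (VInt (a + b))
  | OSub, [VInt a; VInt b] => Some (VInt (a - b))
  | ODiv, [VInt a; VInt b] => Some (VInt (zdiv0 a b))
  | OMod, [VInt a; VInt b] => Some (VInt (zmod0 a b))
  | OSize, [VInt a] => Some (VInt (zsize a))
  | OGe, [VInt a; VInt b] => Some (VBool (b <=? a))
  | OLe, [VInt a; VInt b] => Some (VBool (a <=? b))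
  | OGt, [VInt a; VInt b] => Some (VBool (b <? a))
  | OLt, [VInt a; VInt b] => Some (VBool (a <? b))
  | OEq, [VInt a; VInt b] => Some (VBool (a =? b))
  | ONe, [VInt a; VInt b] => Some (VBool (negb (a =? b)))
  | ONot, [VBool a] => Some (VBool (negb a))
  | OAnd, [VBool a; VBool b] => Some (VBool (a && b))
  | OOr, [VBool a; VBool b] => Some (VBool (a || b))
  | _, _ => None
  end.

Inductive eval (S : store) : expr -> value -> Prop :=
  | E_Var x v : S x = Some v -> eval S (EVar x) v
  | E_Num n : eval S (ENum n) (VInt (Z.of_nat n))
  | E_True : eval S ETrue (VBool true)
  | E_False : eval S EFalse (VBool false)
  | E_Op o es vs v :
      Forall2 (eval S) es vs -> op_sem o vs = Some v -> eval S (EOp o es) v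
  | E_Paren e v : eval S e v -> eval S (EParen e) v.

Definition default_value (t : ty) : value :=
  match t with TBool => VBool false | _ => VInt 0 end.

Inductive exec : store -> stmt -> store -> Prop :=
  | X_Decl S t x : exec S (SDecl t x) (upd S x (default_value t))
  | X_Assign S x e v :
      S x <> None -> eval S e v -> exec S (SAssign x e) (upd S x v)
  | X_Block S ss S' : exec_seq S ss S' -> exec S (SBlock ss) S'
  | X_IfT S e s1 s2 S' :
      eval S e (VBool true) -> exec S s1 S' -> exec S (SIf e s1 s2) S'
  | X_IfF S e s1 s2 S' :
      eval S e (VBool false) -> exec S s2 S' -> exec S (SIf e s1 s2) S'
  | X_For S x e s i S' :
      eval S (EOp OSize [e]) (VInt i) -> exec_loop x s 0 i S S' ->
      exec S (SFor x e s) S'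
with exec_seq : store -> list stmt -> store -> Prop :=
  | XS_Nil S : exec_seq S [] S
  | XS_Cons S s ss S1 S2 : exec S s S1 -> exec_seq S1 ss S2 -> exec_seq S (s :: ss) S2
(* exec_loop x s j i S S' : iterations j, ..., i-1 of the loop body *)
with exec_loop : var -> stmt -> Z -> Z -> store -> store -> Prop :=
  | XL_Done x s j i S : i <= j -> exec_loop x s j i S S
  | XL_Step x s j i S S1 S' :
      j < i -> exec (upd S x (VInt j)) s S1 -> exec_loop x s (j + 1) i S1 S' ->
      exec_loop x s j i S S'.

Definition tenv := var -> option ty.

Definition op_ty (o : op) (ts : list ty) : option ty :=
  match o, ts with
  | ONot, [TBool] => Some TBool
  | (OAnd | OOr), [TBool; TBool] => Some TBool
  | (OGe | OLe | OGt | OLt | OEq | ONe), [a; b] =>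
      match a, b with TBool, _ | _, TBool => None | _, _ => Some TBool end
  | ONeg, [a] => match a with TBool => None | _ => Some a end
  | (OAdd | OSub | ODiv | OMod), [a; b] =>
      match a, b with TBool, _ | _, TBool => None | _, _ => Some (ty_sup a b) end
  | OSize, [TIint] => Some TIint
  | _, _ => None
  end.

(* expression typing (the loop indicator plays no role for expressions) *)
Inductive expr_ty (G : tenv) : expr -> ty -> Prop :=
  | T_Var x t : G x = Some t -> expr_ty G (EVar x) t
  | T_Num n : expr_ty G (ENum n) TIint
  | T_True : expr_ty G ETrue TBool
  | T_False : expr_ty G EFalse TBool
  | T_Op o es ts t :
      Forall2 (expr_ty G) es ts -> op_ty o ts = Some t -> expr_ty G (EOp o es) t
  | T_Paren e t : expr_ty G e t -> expr_ty G (EParen e) t.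

Definition compatible (a b : ty) : Prop :=
  (is_int a /\ is_int b) \/ (a = TBool /\ b = TBool).

Inductive stmt_ty : tenv -> bool -> stmt -> tenv -> Prop :=
  | TS_Decl G l t x :
      G x = None -> ~ (l = true /\ t = TIint) ->
      stmt_ty G l (SDecl t x) (upd G x t)
  | TS_Assign G l x e tx te :
      G x = Some tx -> ~ (l = true /\ tx = TIint) -> expr_ty G e te ->
      compatible te tx -> stmt_ty G l (SAssign x e) G
  | TS_Block G l ss G' : seq_ty G l ss G' -> stmt_ty G l (SBlock ss) G
  | TS_If G l e s1 s2 G1 G2 :
      expr_ty G e TBool -> stmt_ty G l s1 G1 -> stmt_ty G l s2 G2 ->
      stmt_ty G l (SIf e s1 s2) G
  | TS_For G l x e s G' :
      expr_ty G (EOp OSize [e]) TIint -> G x = None ->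
      stmt_ty (upd G x TIint) true s G' -> stmt_ty G l (SFor x e s) G
with seq_ty : tenv -> bool -> list stmt -> tenv -> Prop :=
  | TQ_Nil G l : seq_ty G l [] G
  | TQ_Cons G l s ss G1 G2 :
      stmt_ty G l s G1 -> seq_ty G1 l ss G2 -> seq_ty G l (s :: ss) G2.

Definition init_env (xs : list var) : tenv :=
  fold_right (fun x G => upd G x TInt) (fun _ => None) xs.

Definition init_store (xs : list var) (vs : list Z) : store :=
  fold_right (fun xv S => upd S (fst xv) (VInt (snd xv))) empty_store (combine xs vs).

Definition well_typed (p : program) : Prop :=
  NoDup (params p) /\
  exists G', seq_ty (init_env (params p)) false (body p) G' /\
             exists t, expr_ty G' (ret p) t /\ is_int t.

(* p computes f : Z^m -> Z (f given on lists, only lists of length m matter) *)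
Definition prog_computes (p : program) (m : nat) (f : list Z -> Z) : Prop :=
  length (params p) = m /\
  forall vs : list Z, length vs = m ->
    exists S', exec_seq (init_store (params p) vs) (body p) S' /\
               eval S' (ret p) (VInt (f vs)).

Definition in_FPC (m : nat) (f : list Z -> Z) : Prop :=
  exists p, well_typed p /\ prog_computes p m f.

Inductive move : Type := MLeft | MRight | MStay.

(* Deterministic single-tape TM with states {0..nstates-1} and tape symbols
   {0..nsymbols-1}; symbol 0 is the blank, 1 = bit 0, 2 = bit 1, 3 = minus
   sign, 4 = argument separator. delta q a = None means q halts on a. *)
Record TM : Type := mkTM {
  nstates : nat;
  nsymbols : nat;
  start : nat;
  delta : nat -> nat -> option (nat * nat * move) }.

Definition TM_wf (M : TM) : Prop :=
  (5 <= nsymbols M)%nat /\ (start M < nstates M)%nat /\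
  forall q a q' a' d, (q < nstates M)%nat -> (a < nsymbols M)%nat ->
    delta M q a = Some (q', a', d) -> (q' < nstates M)%nat /\ (a' < nsymbols M)%nat.

Record config : Type := mkConfig { cstate : nat; ctape : Z -> nat; cpos : Z }.

Definition step (M : TM) (c : config) : option config :=
  match delta M (cstate c) (ctape c (cpos c)) with
  | None => None
  | Some (q', a, d) =>
      Some (mkConfig q'
              (fun z => if Z.eqb z (cpos c) then a else ctape c z)
              (cpos c + match d with MLeft => -1 | MRight => 1 | MStay => 0 end))
  end.

Fixpoint run (M : TM) (n : nat) (c : config) : config :=
  match n with
  | O => c
  | S n' => match step M c with None => c | Some c' => run M n' c' end
  end.

(* binary digits of a natural number, most significant first (0 |-> [bit0]) *)
Definition bits_pos (p : positive) : list nat :=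
  let fix go (p : positive) (acc : list nat) :=
    match p with
    | xH => 2%nat :: acc
    | xO p' => go p' (1%nat :: acc)
    | xI p' => go p' (2%nat :: acc)
    end in go p [].

Definition enc_Z (z : Z) : list nat :=
  match z with
  | Z0 => [1%nat]
  | Zpos p => bits_pos p
  | Zneg p => 3%nat :: bits_pos p
  end.

Fixpoint enc_input (vs : list Z) : list nat :=
  match vs with
  | [] => []
  | [v] => enc_Z v
  | v :: vs' => enc_Z v ++ 4%nat :: enc_input vs'
  end.

Definition init_config (M : TM) (w : list nat) : config :=
  mkConfig (start M)
           (fun z => if Z.ltb z 0 then 0%nat else nth (Z.to_nat z) w 0%nat)
           0.

Definition output_is (c : config) (out : list nat) : Prop :=
  (forall i, (i < length out)%nat -> ctape c (cpos c + Z.of_nat i) = nth i out 0%nat) /\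
  ctape c (cpos c + Z.of_nat (length out)) = 0%nat.

Definition in_FP (m : nat) (f : list Z -> Z) : Prop :=
  exists (M : TM) (c k : nat), TM_wf M /\
    forall vs : list Z, length vs = m ->
      let w := enc_input vs in
      exists t : nat, (t <= c * (length w + 1) ^ k)%nat /\
        let cf := run M t (init_config M w) in
        step M cf = None /\ output_is cf (enc_Z (f vs)).

From Stdlib Require Import ZArith List Lia.
Import ListNotations.
Open Scope Z_scope.

(* A machine [M] running in time [c (n + 1) ^ k] is simulated by a program that keeps the tape in
   two integer registers [L] and [R]: with [B] the number of tape symbols, the cells from the head
   rightwards are the base-[B] digits of [R] and the cells to its left those of [L].  One step of
   [M] is then a case distinction on the state and the head symbol [R mod B], followed by updates
   of [L] and [R] that only add, divide and take remainders by the constant [B].  While the input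
   is written onto [R] symbol by symbol, a register is doubled for each symbol, so that afterwards
   it holds [2 ^ (c + n)], of size [c + n + 1].  Using it as the bound of [k + 1] nested loops
   runs the step code [(c + n + 1) ^ (k + 1) >= c (n + 1) ^ k] times; once [M] has halted, further
   steps change nothing.  Finally the output is read off [R] digit by digit.  The only [iint]
   variable is the common loop bound, which is assigned outside all loops, so the program is
   well typed. *)

Lemma upd_eq {A} (S : var -> option A) x v : upd S x v x = Some v.
Proof. unfold upd. now rewrite Nat.eqb_refl. Qed.

Lemma upd_neq {A} (S : var -> option A) x y v : x <> y -> upd S x v y = S y.
Proof. intro Hxy. unfold upd. destruct (Nat.eqb_spec y x); [congruence | reflexivity]. Qed.

Ltac lookup := repeat (rewrite upd_eq || (rewrite upd_neq by lia)).

Definition eadd a b := EOp OAdd [a; b].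
Definition esub a b := EOp OSub [a; b].
Definition ediv a b := EOp ODiv [a; b].
Definition emod a b := EOp OMod [a; b].
Definition eeq a b := EOp OEq [a; b].
Definition elt a b := EOp OLt [a; b].
Definition eand a b := EOp OAnd [a; b].

(* The language has no multiplication: multiplying by a constant is iterated addition. *)
Fixpoint emul_nat (k : nat) (e : expr) : expr :=
  match k with O => ENum 0 | S k' => eadd e (emul_nat k' e) end.

Section Evaluation.
Variable S : store.

Lemma eval_var x z : S x = Some (VInt z) -> eval S (EVar x) (VInt z).
Proof. apply E_Var. Qed.

Lemma eval_num n z : z = Z.of_nat n -> eval S (ENum n) (VInt z).
Proof. intros ->. constructor. Qed.

Lemma eval_binop o a b x y v :
  eval S a (VInt x) -> eval S b (VInt y) -> op_sem o [VInt x; VInt y] = Some v ->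
  eval S (EOp o [a; b]) v.
Proof. intros. econstructor; eauto. Qed.

Lemma eval_add a b x y z :
  eval S a (VInt x) -> eval S b (VInt y) -> z = x + y -> eval S (eadd a b) (VInt z).
Proof. intros ? ? ->. eapply eval_binop; eauto. Qed.

Lemma eval_sub a b x y z :
  eval S a (VInt x) -> eval S b (VInt y) -> z = x - y -> eval S (esub a b) (VInt z).
Proof. intros ? ? ->. eapply eval_binop; eauto. Qed.

(* On nonnegative operands the truncating division of the language is floor division. *)
Lemma eval_div a b x y z :
  eval S a (VInt x) -> eval S b (VInt y) -> 0 <= x -> 0 < y -> z = x / y ->
  eval S (ediv a b) (VInt z).
Proof.
  intros ? ? ? ? ->. eapply eval_binop; eauto. cbn. unfold zdiv0.
  rewrite (proj2 (Z.eqb_neq y 0)) by lia. now rewrite Z.quot_div_nonneg by lia.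
Qed.

Lemma eval_mod a b x y z :
  eval S a (VInt x) -> eval S b (VInt y) -> 0 <= x -> 0 < y -> z = x mod y ->
  eval S (emod a b) (VInt z).
Proof.
  intros ? ? ? ? ->. eapply eval_binop; eauto. cbn. unfold zmod0.
  rewrite (proj2 (Z.eqb_neq y 0)) by lia. now rewrite Z.rem_mod_nonneg by lia.
Qed.

Lemma eval_eqb a b x y c :
  eval S a (VInt x) -> eval S b (VInt y) -> c = (x =? y) -> eval S (eeq a b) (VBool c).
Proof. intros ? ? ->. eapply eval_binop; eauto. Qed.

Lemma eval_ltb a b x y c :
  eval S a (VInt x) -> eval S b (VInt y) -> c = (x <? y) -> eval S (elt a b) (VBool c).
Proof. intros ? ? ->. eapply eval_binop; eauto. Qed.

Lemma eval_and a b x y :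
  eval S a (VBool x) -> eval S b (VBool y) -> eval S (eand a b) (VBool (x && y)).
Proof. intros. econstructor; eauto. Qed.

Lemma eval_mul_nat e k x z :
  eval S e (VInt x) -> z = Z.of_nat k * x -> eval S (emul_nat k e) (VInt z).
Proof.
  intros He ->. induction k as [|k IH]; cbn [emul_nat].
  - now apply eval_num.
  - eapply eval_add; [exact He | exact IH | lia].
Qed.

End Evaluation.

Ltac eval_arith := repeat first
  [ apply eval_var; lookup; first [reflexivity | eassumption]
  | eapply eval_num; reflexivity
  | eapply eval_add | eapply eval_sub | eapply eval_mul_nat | eapply eval_div | eapply eval_mod
  | match goal with |- ?z = _ => is_evar z; reflexivity end ].

Lemma exec_assign S x e v : S x <> None -> eval S e v -> exec S (SAssign x e) (upd S x v).
Proof. intros. now constructor. Qed.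

Lemma exec_skip S : exec S (SBlock []) S.
Proof. repeat constructor. Qed.

Lemma exec_if S e b s1 s2 S' :
  eval S e (VBool b) -> exec S (if b then s1 else s2) S' -> exec S (SIf e s1 s2) S'.
Proof. destruct b; [apply X_IfT | apply X_IfF]. Qed.

Lemma exec_seq_app S ss1 S1 ss2 S2 :
  exec_seq S ss1 S1 -> exec_seq S1 ss2 S2 -> exec_seq S (ss1 ++ ss2) S2.
Proof. induction 1; cbn; auto. intros. econstructor; eauto. Qed.

Lemma zsize_nonneg v : 0 <= zsize v.
Proof. apply Z.log2_up_nonneg. Qed.

Lemma exec_for_var S x y s v S' :
  S y = Some (VInt v) -> exec_loop x s 0 (zsize v) S S' -> exec S (SFor x (EVar y) s) S'.
Proof. intros. econstructor; eauto. econstructor; [repeat constructor; eauto | reflexivity]. Qed.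

Lemma exec_loop_inv x s i (P : Z -> store -> Prop) :
  (forall j S, 0 <= j < i -> P j S -> exists S', exec (upd S x (VInt j)) s S' /\ P (j + 1) S') ->
  forall n j S, Z.of_nat n = i - j -> 0 <= j -> P j S ->
  exists S', exec_loop x s j i S S' /\ P i S'.
Proof.
  intros Hbody n. induction n as [|n IH]; intros j S Hn Hj HP.
  - exists S. split; [constructor; lia | now replace i with j by lia].
  - destruct (Hbody j S) as [S1 [Hexec HP1]]; [lia | exact HP |].
    destruct (IH (j + 1) S1) as [S' [Hloop HP']]; [lia | lia | exact HP1 |].
    exists S'. split; [econstructor; eauto; lia | exact HP'].
Qed.

Lemma exec_for_inv S x y s v (P : Z -> store -> Prop) :
  S y = Some (VInt v) -> P 0 S ->
  (forall j S, 0 <= j < zsize v -> P j S ->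
     exists S', exec (upd S x (VInt j)) s S' /\ P (j + 1) S') ->
  exists S', exec S (SFor x (EVar y) s) S' /\ P (zsize v) S'.
Proof.
  intros Hy H0 Hbody. pose proof (zsize_nonneg v).
  destruct (exec_loop_inv x s (zsize v) P Hbody (Z.to_nat (zsize v)) 0 S) as [S' [Hloop HP]];
    [lia | lia | exact H0 |].
  exists S'. split; [eapply exec_for_var; eauto | exact HP].
Qed.

Definition int_typed (G : tenv) (e : expr) := exists t, expr_ty G e t /\ is_int t.

Section Typing.
Variable G : tenv.

Lemma int_typed_var x t : G x = Some t -> is_int t -> int_typed G (EVar x).
Proof. intros. exists t. split; [now constructor | assumption]. Qed.

Lemma int_typed_num n : int_typed G (ENum n).
Proof. exists TIint. split; [constructor | now left]. Qed.

Lemma int_typed_arith o a b : In o [OAdd; OSub; ODiv; OMod] ->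
  int_typed G a -> int_typed G b -> int_typed G (EOp o [a; b]).
Proof.
  intros Ho [ta [Ha Hta]] [tb [Hb Htb]]. exists (ty_sup ta tb). split.
  - econstructor; [repeat constructor; eauto |].
    destruct Hta as [-> | ->], Htb as [-> | ->];
      destruct Ho as [<- | [<- | [<- | [<- | []]]]]; reflexivity.
  - destruct Hta as [-> | ->], Htb as [-> | ->]; cbn; unfold is_int; auto.
Qed.

Lemma int_typed_add a b : int_typed G a -> int_typed G b -> int_typed G (eadd a b).
Proof. apply int_typed_arith. cbn. auto. Qed.

Lemma int_typed_sub a b : int_typed G a -> int_typed G b -> int_typed G (esub a b).
Proof. apply int_typed_arith. cbn. auto. Qed.

Lemma int_typed_div a b : int_typed G a -> int_typed G b -> int_typed G (ediv a b).
Proof. apply int_typed_arith. cbn. auto. Qed.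

Lemma int_typed_mod a b : int_typed G a -> int_typed G b -> int_typed G (emod a b).
Proof. apply int_typed_arith. cbn. auto 6. Qed.

Lemma int_typed_mul_nat k e : int_typed G e -> int_typed G (emul_nat k e).
Proof.
  intros He. induction k; cbn [emul_nat]; [apply int_typed_num | now apply int_typed_add].
Qed.

Lemma bool_typed_cmp o a b : In o [OEq; OLt] ->
  int_typed G a -> int_typed G b -> expr_ty G (EOp o [a; b]) TBool.
Proof.
  intros Ho [ta [Ha Hta]] [tb [Hb Htb]]. econstructor; [repeat constructor; eauto |].
  destruct Hta as [-> | ->], Htb as [-> | ->]; destruct Ho as [<- | [<- | []]]; reflexivity.
Qed.

Lemma bool_typed_eq a b : int_typed G a -> int_typed G b -> expr_ty G (eeq a b) TBool.
Proof. apply bool_typed_cmp. cbn. auto. Qed.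

Lemma bool_typed_lt a b : int_typed G a -> int_typed G b -> expr_ty G (elt a b) TBool.
Proof. apply bool_typed_cmp. cbn. auto. Qed.

Lemma bool_typed_and a b : expr_ty G a TBool -> expr_ty G b TBool -> expr_ty G (eand a b) TBool.
Proof. intros. econstructor; [repeat constructor; eauto | reflexivity]. Qed.

Lemma stmt_ty_assign l x e : G x = Some TInt -> int_typed G e -> stmt_ty G l (SAssign x e) G.
Proof.
  intros Hx [t [He Ht]]. econstructor; eauto; [intros [_ H]; discriminate |].
  left. split; [exact Ht | now right].
Qed.

Lemma stmt_ty_assign_iint x e :
  G x = Some TIint -> int_typed G e -> stmt_ty G false (SAssign x e) G.
Proof.
  intros Hx [t [He Ht]]. econstructor; eauto; [intros [H _]; discriminate |].
  left. split; [exact Ht | now left].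
Qed.

Lemma seq_ty_invariant l ss : Forall (fun s => stmt_ty G l s G) ss -> seq_ty G l ss G.
Proof. induction 1; econstructor; eauto. Qed.

Lemma stmt_ty_block l ss : Forall (fun s => stmt_ty G l s G) ss -> stmt_ty G l (SBlock ss) G.
Proof. intros. econstructor. now apply seq_ty_invariant. Qed.

Lemma stmt_ty_skip l : stmt_ty G l (SBlock []) G.
Proof. apply stmt_ty_block. constructor. Qed.

Lemma stmt_ty_if l e s1 s2 :
  expr_ty G e TBool -> stmt_ty G l s1 G -> stmt_ty G l s2 G -> stmt_ty G l (SIf e s1 s2) G.
Proof. intros. econstructor; eauto. Qed.

Lemma stmt_ty_for l x y s G' : G y = Some TIint -> G x = None ->
  stmt_ty (upd G x TIint) true s G' -> stmt_ty G l (SFor x (EVar y) s) G.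
Proof. intros. econstructor; eauto. econstructor; [repeat constructor; eauto | reflexivity]. Qed.

End Typing.

Lemma seq_ty_app G l ss1 G1 ss2 G2 :
  seq_ty G l ss1 G1 -> seq_ty G1 l ss2 G2 -> seq_ty G l (ss1 ++ ss2) G2.
Proof. induction 1; cbn; auto. intros. econstructor; eauto. Qed.

(** * Tapes as pairs of numbers *)

Lemma mod_mul_add B X d : 0 <= d < B -> (B * X + d) mod B = d.
Proof. intros. rewrite Z.add_comm, Z.mul_comm, Z.mod_add by lia. now apply Z.mod_small. Qed.

Lemma div_mul_add B X d : 0 <= d < B -> (B * X + d) / B = X.
Proof. intros. rewrite Z.add_comm, Z.mul_comm, Z.div_add, Z.div_small by lia. lia. Qed.

Fixpoint digit (B N : Z) (j : nat) : nat :=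
  match j with O => Z.to_nat (N mod B) | S j' => digit B (N / B) j' end.

Lemma digit_spec B N j : 0 < B -> digit B N j = Z.to_nat ((N / B ^ Z.of_nat j) mod B).
Proof.
  intros HB. revert N. induction j as [|j IH]; intros N; cbn [digit].
  - now rewrite Z.div_1_r.
  - rewrite IH, Z.div_div, <- Z.pow_succ_r, <- Nat2Z.inj_succ; auto with zarith.
Qed.

Lemma digit_zero B j : digit B 0 j = 0%nat.
Proof.
  revert B. induction j as [|j IH]; intros B; cbn [digit].
  - now rewrite Zmod_0_l.
  - now rewrite Zdiv_0_l.
Qed.

Lemma digit_nonzero_le B N j : 1 < B -> 0 <= N -> digit B N j <> 0%nat -> B ^ Z.of_nat j <= N.
Proof.
  intros HB HN Hd. rewrite digit_spec in Hd by lia.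
  destruct (Z.lt_ge_cases N (B ^ Z.of_nat j)) as [Hlt | Hge]; [| exact Hge].
  now rewrite Z.div_small in Hd by lia.
Qed.

Definition from_digits (B : Z) (l : list nat) : Z :=
  fold_right (fun d acc => Z.of_nat d + B * acc) 0 l.

Lemma from_digits_cons B d l : from_digits B (d :: l) = Z.of_nat d + B * from_digits B l.
Proof. reflexivity. Qed.

Lemma from_digits_nonneg B l : 0 <= B -> 0 <= from_digits B l.
Proof.
  intros HB. induction l as [|d l IH]; [cbn; lia |].
  rewrite from_digits_cons.
  pose proof (Nat2Z.is_nonneg d). nia.
Qed.

Lemma digit_from_digits B l j : (forall d, In d l -> Z.of_nat d < B) ->
  digit B (from_digits B l) j = nth j l 0%nat.
Proof.
  revert j. induction l as [|d l IH]; intros j Hl.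
  - cbn [from_digits fold_right]. rewrite digit_zero. now destruct j.
  - assert (Hd : 0 <= Z.of_nat d < B) by (split; [lia | apply Hl; now left]).
    rewrite from_digits_cons.
    rewrite Z.add_comm. destruct j as [|j]; cbn [digit nth].
    + rewrite mod_mul_add by exact Hd. lia.
    + rewrite div_mul_add by exact Hd. apply IH. intros; apply Hl; now right.
Qed.

Definition tape_rep (B : Z) (tape : Z -> nat) (pos L R : Z) : Prop :=
  forall j : nat,
    tape (pos + Z.of_nat j) = digit B R j /\ tape (pos - 1 - Z.of_nat j) = digit B L j.

Lemma tape_rep_head B tape pos L R : tape_rep B tape pos L R -> tape pos = Z.to_nat (R mod B).
Proof. intros H. destruct (H 0%nat) as [H0 _]. now rewrite Z.add_0_r in H0. Qed.

Lemma tape_rep_write B tape pos L R a : 0 < B -> Z.of_nat a < B -> tape_rep B tape pos L R ->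
  tape_rep B (fun z => if z =? pos then a else tape z) pos L (B * (R / B) + Z.of_nat a).
Proof.
  intros HB Ha H j. destruct (H j) as [_ Hl]. split.
  - destruct j as [|j]; cbn [digit].
    + rewrite Z.add_0_r, Z.eqb_refl, mod_mul_add by lia. lia.
    + rewrite (proj2 (Z.eqb_neq _ _)) by lia. rewrite div_mul_add by lia.
      destruct (H (S j)) as [Hr _]. exact Hr.
  - now rewrite (proj2 (Z.eqb_neq _ _)) by lia.
Qed.

Definition move_offset (d : move) : Z := match d with MLeft => -1 | MRight => 1 | MStay => 0 end.

Definition move_regs (B : Z) (d : move) (L R : Z) : Z * Z :=
  match d with
  | MLeft => (L / B, B * R + L mod B)
  | MRight => (B * L + R mod B, R / B)
  | MStay => (L, R)
  end.

Lemma tape_rep_move B tape pos L R d : 0 < B -> tape_rep B tape pos L R ->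
  tape_rep B tape (pos + move_offset d) (fst (move_regs B d L R)) (snd (move_regs B d L R)).
Proof.
  intros HB H j. destruct d; cbn [move_offset move_regs fst snd]; [| | now rewrite Z.add_0_r].
  - pose proof (Z.mod_pos_bound L B HB). split.
    + destruct j as [|j]; cbn [digit].
      * rewrite mod_mul_add by lia. destruct (H 0%nat) as [_ Hl].
        now replace (pos + -1 + Z.of_nat 0) with (pos - 1 - Z.of_nat 0) by lia.
      * rewrite div_mul_add by lia. destruct (H j) as [Hr _].
        now replace (pos + -1 + Z.of_nat (S j)) with (pos + Z.of_nat j) by lia.
    + destruct (H (S j)) as [_ Hl]. cbn [digit] in Hl.
      now replace (pos + -1 - 1 - Z.of_nat j) with (pos - 1 - Z.of_nat (S j)) by lia.
  - pose proof (Z.mod_pos_bound R B HB). split.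
    + destruct (H (S j)) as [Hr _]. cbn [digit] in Hr.
      now replace (pos + 1 + Z.of_nat j) with (pos + Z.of_nat (S j)) by lia.
    + destruct j as [|j]; cbn [digit].
      * rewrite mod_mul_add by lia. destruct (H 0%nat) as [Hr _].
        now replace (pos + 1 - 1 - Z.of_nat 0) with (pos + Z.of_nat 0) by lia.
      * rewrite div_mul_add by lia. destruct (H j) as [_ Hl].
        now replace (pos + 1 - 1 - Z.of_nat (S j)) with (pos - 1 - Z.of_nat j) by lia.
Qed.

Lemma tape_rep_init B w : (forall d, In d w -> Z.of_nat d < B) ->
  tape_rep B (fun z => if z <? 0 then 0%nat else nth (Z.to_nat z) w 0%nat) 0 0 (from_digits B w).
Proof.
  intros Hw j. rewrite digit_from_digits, digit_zero by exact Hw. split.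
  - rewrite (proj2 (Z.ltb_ge _ _)) by lia. f_equal. lia.
  - now rewrite (proj2 (Z.ltb_lt _ _)) by lia.
Qed.

(* Registers 0-10 are [int] variables and register 11 is the [iint] variable bounding every loop;
   the loop counters are 12, 13, ... and the program's parameters come after them. *)
Notation reg_state := 0%nat.
Notation reg_left := 1%nat.
Notation reg_right := 2%nat.
Notation reg_sym := 3%nat.
Notation reg_bits := 4%nat.
Notation reg_pow := 5%nat.
Notation reg_digit := 6%nat.
Notation reg_val := 7%nat.
Notation reg_neg := 8%nat.
Notation reg_done := 9%nat.
Notation reg_out := 10%nat.
Notation reg_bound := 11%nat.
Notation counter j := (12 + j)%nat.

Definition declared (S : store) : Prop := forall v, (v < 12)%nat -> S v <> None.

Lemma declared_upd S x v : declared S -> declared (upd S x v).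
Proof. intros H y Hy. unfold upd. destruct (Nat.eqb y x); [discriminate | auto]. Qed.

Lemma declared_reg S x : declared S -> (x < 12)%nat -> S x <> None.
Proof. auto. Qed.

Definition agree_from (n : nat) (S S' : store) : Prop := forall v, (n <= v)%nat -> S' v = S v.

Lemma agree_from_refl n S : agree_from n S S.
Proof. now intros v _. Qed.

Lemma agree_from_trans n S1 S2 S3 : agree_from n S1 S2 -> agree_from n S2 S3 -> agree_from n S1 S3.
Proof. intros H12 H23 v Hv. rewrite H23, H12; auto. Qed.

Lemma agree_from_upd n S x v : (x < n)%nat -> agree_from n S (upd S x v).
Proof. intros Hx y Hy. apply upd_neq. lia. Qed.

Lemma agree_from_le n n' S S' : (n <= n')%nat -> agree_from n S S' -> agree_from n' S S'.
Proof. intros Hn H v Hv. apply H. lia. Qed.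

Ltac assign :=
  apply exec_assign;
    [eapply declared_reg; [repeat apply declared_upd; eassumption | lia] | eval_arith; try nia].

Ltac assign_seq := eapply XS_Cons; [assign | ].

(** * Simulating one step *)

Definition move_code (B : nat) (d : move) : list stmt :=
  match d with
  | MLeft =>
      [SAssign reg_right (eadd (emul_nat B (EVar reg_right)) (emod (EVar reg_left) (ENum B)));
       SAssign reg_left (ediv (EVar reg_left) (ENum B))]
  | MRight =>
      [SAssign reg_left (eadd (emul_nat B (EVar reg_left)) (emod (EVar reg_right) (ENum B)));
       SAssign reg_right (ediv (EVar reg_right) (ENum B))]
  | MStay => []
  end.

Lemma move_regs_nonneg B d L R : 0 < B -> 0 <= L -> 0 <= R ->
  0 <= fst (move_regs B d L R) /\ 0 <= snd (move_regs B d L R).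
Proof.
  intros. pose proof (Z.mod_pos_bound L B). pose proof (Z.mod_pos_bound R B).
  pose proof (Z.div_pos L B). pose proof (Z.div_pos R B).
  destruct d; cbn; nia.
Qed.

Lemma exec_move_code B d S L R : (0 < B)%nat -> declared S ->
  S reg_left = Some (VInt L) -> S reg_right = Some (VInt R) -> 0 <= L -> 0 <= R ->
  exists S', exec_seq S (move_code B d) S' /\
    forall v, S' v = upd (upd S reg_left (VInt (fst (move_regs (Z.of_nat B) d L R))))
                         reg_right (VInt (snd (move_regs (Z.of_nat B) d L R))) v.
Proof.
  intros HB Hdecl HL HR HL0 HR0.
  destruct d; cbn [move_code move_regs fst snd];
    [eexists; split; [assign_seq; assign_seq; apply XS_Nil |] .. | exists S; split; [constructor |]];
    intros v; unfold upd; destruct (Nat.eqb_spec v 2), (Nat.eqb_spec v 1); subst; congruence.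
Qed.

Definition next_config (M : TM) (c : config) : config :=
  match step M c with None => c | Some c' => c' end.

Section Step.
Variable M : TM.
Let B := nsymbols M.

(* [reg_sym] holds the head symbol [R mod B], so [R - reg_sym + a'] overwrites it by [a']. *)
Definition transition_code (q' a' : nat) (d : move) : stmt :=
  SBlock ([SAssign reg_state (ENum q');
           SAssign reg_right (eadd (esub (EVar reg_right) (EVar reg_sym)) (ENum a'))]
          ++ move_code B d).

Definition action_code (q a : nat) : stmt :=
  match delta M q a with
  | None => SBlock []
  | Some (q', a', d) => transition_code q' a' d
  end.

Fixpoint dispatch (l : list (nat * nat)) : stmt :=
  match l with
  | [] => SBlock []
  | (q, a) :: l' =>
      SIf (eand (eeq (EVar reg_state) (ENum q)) (eeq (EVar reg_sym) (ENum a)))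
        (action_code q a) (dispatch l')
  end.

Definition step_code : stmt :=
  SBlock [SAssign reg_sym (emod (EVar reg_right) (ENum B));
          dispatch (list_prod (seq 0 (nstates M)) (seq 0 B))].

Inductive simulates (c : config) (S : store) : Prop :=
  Simulates L R :
    S reg_state = Some (VInt (Z.of_nat (cstate c))) ->
    S reg_left = Some (VInt L) -> S reg_right = Some (VInt R) -> 0 <= L -> 0 <= R ->
    tape_rep (Z.of_nat B) (ctape c) (cpos c) L R -> (cstate c < nstates M)%nat -> declared S ->
    simulates c S.

Lemma simulates_upd c S x v : (3 <= x)%nat -> simulates c S -> simulates c (upd S x v).
Proof.
  intros Hx [L R HQ HL HR HL0 HR0 Htape Hq Hdecl].
  apply (Simulates _ _ L R); auto; try (lookup; assumption). now apply declared_upd.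
Qed.

Lemma exec_dispatch l S q a S' : In (q, a) l ->
  S reg_state = Some (VInt (Z.of_nat q)) -> S reg_sym = Some (VInt (Z.of_nat a)) ->
  exec S (action_code q a) S' -> exec S (dispatch l) S'.
Proof.
  induction l as [|[q0 a0] l IH]; cbn; [tauto |]. intros Hin HQ HA Hact.
  eapply exec_if.
  - apply eval_and; eapply eval_eqb; (apply eval_var; eassumption) || constructor || reflexivity.
  - destruct (Z.eqb_spec (Z.of_nat q) (Z.of_nat q0)), (Z.eqb_spec (Z.of_nat a) (Z.of_nat a0));
      cbn [andb]; [replace q0 with q by lia; replace a0 with a by lia; exact Hact |
                   apply IH; auto; destruct Hin as [Hin | Hin]; [inversion Hin; lia | exact Hin] ..].
Qed.

Lemma exec_transition S tape pos L R q' a' d :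
  (0 < B)%nat -> (q' < nstates M)%nat -> (a' < B)%nat -> declared S ->
  S reg_left = Some (VInt L) -> S reg_right = Some (VInt R) ->
  S reg_sym = Some (VInt (R mod Z.of_nat B)) -> 0 <= L -> 0 <= R ->
  tape_rep (Z.of_nat B) tape pos L R ->
  exists S', exec S (transition_code q' a' d) S' /\
    simulates (mkConfig q' (fun z => if z =? pos then a' else tape z) (pos + move_offset d)) S' /\
    agree_from 4 S S'.
Proof.
  intros HB Hq' Ha' Hdecl HL HR HA HL0 HR0 Htape.
  set (R1 := Z.of_nat B * (R / Z.of_nat B) + Z.of_nat a').
  assert (HR1 : R - R mod Z.of_nat B + Z.of_nat a' = R1).
  { pose proof (Z.div_mod R (Z.of_nat B)). unfold R1. lia. }
  assert (HR1pos : 0 <= R1) by (pose proof (Z.div_pos R (Z.of_nat B)); unfold R1; nia).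
  set (S1 := upd (upd S reg_state (VInt (Z.of_nat q'))) reg_right (VInt R1)).
  assert (Hdecl1 : declared S1) by (now repeat apply declared_upd).
  destruct (exec_move_code B d S1 L R1) as (S' & Hmove & HS'); auto; try (unfold S1; now lookup).
  pose proof (move_regs_nonneg (Z.of_nat B) d L R1) as [HL' HR']; [lia | auto | auto |].
  exists S'. split; [| split].
  - apply X_Block. eapply exec_seq_app; [| exact Hmove].
    unfold S1. rewrite <- HR1. assign_seq. assign_seq. apply XS_Nil.
  - apply (Simulates _ _ (fst (move_regs (Z.of_nat B) d L R1)) (snd (move_regs (Z.of_nat B) d L R1)));
      rewrite ?HS'; unfold S1; auto; try (now lookup); cbn [ctape cpos cstate].
    + apply tape_rep_move; [lia |]. apply tape_rep_write; auto; lia.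
    + intros v Hv. rewrite HS'. now apply (declared_upd _ _ _ (declared_upd _ _ _ Hdecl1)).
  - intros v Hv. rewrite HS'. unfold S1. now lookup.
Qed.

Lemma exec_step_code c S : TM_wf M -> simulates c S ->
  exists S', exec S step_code S' /\ simulates (next_config M c) S' /\ agree_from 4 S S'.
Proof.
  intros [HB [_ Hwf]] Hsim. pose proof Hsim as [L R HQ HL HR HL0 HR0 Htape Hq Hdecl].
  fold B in HB. pose proof (Z.mod_pos_bound R (Z.of_nat B) ltac:(lia)) as Hmod.
  set (a := Z.to_nat (R mod Z.of_nat B)).
  assert (Ha : ctape c (cpos c) = a) by (eapply tape_rep_head; eauto).
  assert (HaB : (a < B)%nat) by lia.
  assert (HaZ : Z.of_nat a = R mod Z.of_nat B) by lia.
  set (S1 := upd S reg_sym (VInt (Z.of_nat a))).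
  assert (Hsim1 : simulates c S1) by (now apply simulates_upd).
  assert (Hsym : exec S (SAssign reg_sym (emod (EVar reg_right) (ENum B))) S1)
    by (unfold S1; rewrite HaZ; assign).
  enough (Hact : exists S', exec S1 (action_code (cstate c) a) S' /\
                   simulates (next_config M c) S' /\ agree_from 4 S1 S').
  { destruct Hact as (S' & Hexec & Hsim' & Hagree). exists S'. split; [| split]; auto.
    - apply X_Block. econstructor; [exact Hsym |]. econstructor; [| constructor].
      apply (exec_dispatch _ _ (cstate c) a); [| unfold S1; now lookup | apply upd_eq | exact Hexec].
      apply in_prod; apply in_seq; lia.
    - apply (agree_from_trans _ _ S1); [unfold S1; apply agree_from_upd; lia | exact Hagree]. }
  unfold next_config, step, action_code. rewrite Ha.
  destruct (delta M (cstate c) a) as [[[q' a'] d] |] eqn:Hd.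
  - destruct (Hwf _ _ _ _ _ Hq HaB Hd) as [Hq' Ha'].
    apply (exec_transition S1 (ctape c) (cpos c) L R); unfold S1; auto; try lia; try (now lookup).
    + now apply declared_upd.
    + now rewrite upd_eq, HaZ.
  - exists S1. split; [apply exec_skip | split; [exact Hsim1 | apply agree_from_refl]].
Qed.

End Step.

(** * The clock *)

Fixpoint nested_loops (n : nat) (s : stmt) : stmt :=
  match n with
  | O => s
  | S n' => SFor (counter n') (EVar reg_bound) (nested_loops n' s)
  end.

Lemma exec_nested_loops (I : nat -> store -> Prop) s y :
  (forall N St, I N St -> St reg_bound = Some (VInt y)) ->
  (forall N St j v, I N St -> I N (upd St (counter j) v)) ->
  (forall N St, I N St -> exists St', exec St s St' /\ I (N + 1)%nat St') ->
  forall n N St, I N St ->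
    exists St', exec St (nested_loops n s) St' /\ I (N + Z.to_nat (zsize y) ^ n)%nat St'.
Proof.
  intros Hbound Hcounter Hbody n. induction n as [|n IH]; intros N St HI; cbn [nested_loops].
  - rewrite Nat.pow_0_r. now apply Hbody.
  - set (K := Z.to_nat (zsize y)).
    destruct (exec_for_inv St (counter n) reg_bound (nested_loops n s) y
                (fun j St' => I (N + Z.to_nat j * K ^ n)%nat St')) as [St' [Hexec HI']].
    + eapply Hbound; eauto.
    + cbn. now rewrite Nat.add_0_r.
    + intros j St1 Hj HI1.
      destruct (IH _ _ (Hcounter _ _ n (VInt j) HI1)) as [St2 [Hexec2 HI2]].
      exists St2. split; [exact Hexec2 |].
      replace (N + Z.to_nat (j + 1) * K ^ n)%nat with (N + Z.to_nat j * K ^ n + K ^ n)%nat by nia.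
      exact HI2.
    + exists St'. split; [exact Hexec |]. now rewrite Nat.pow_succ_r'.
Qed.

Lemma iter_next_config_halted M c n : step M c = None -> Nat.iter n (next_config M) c = c.
Proof.
  intros Hc. induction n as [|n IH]; [reflexivity |].
  rewrite Nat.iter_succ, IH. unfold next_config. now rewrite Hc.
Qed.

Lemma run_iter M n c : run M n c = Nat.iter n (next_config M) c.
Proof.
  revert c. induction n as [|n IH]; intros c; [reflexivity |].
  cbn [run]. rewrite Nat.iter_succ_r.
  destruct (step M c) as [c' |] eqn:Hc;
    replace (next_config M c) with (match step M c with None => c | Some c' => c' end)
      by reflexivity; rewrite Hc.
  - apply IH.
  - symmetry. now apply iter_next_config_halted.
Qed.

Lemma iter_next_config_run M c t N : (t <= N)%nat -> step M (run M t c) = None ->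
  Nat.iter N (next_config M) c = run M t c.
Proof.
  intros HtN Hhalt. rewrite run_iter in *.
  replace N with (N - t + t)%nat by lia. rewrite Nat.iter_add.
  now apply iter_next_config_halted.
Qed.

Lemma zsize_pow2 n : zsize (2 ^ Z.of_nat n) = Z.of_nat n + 1.
Proof.
  unfold zsize. rewrite Z.abs_eq by (apply Z.pow_nonneg; lia).
  rewrite Z.add_1_r, Z.log2_up_succ_pow2; lia.
Qed.

Lemma poly_time_le c n k : (c * (n + 1) ^ k <= (c + n + 1) ^ S k)%nat.
Proof. cbn. apply Nat.mul_le_mono; [lia | apply Nat.pow_le_mono_l; lia]. Qed.

Definition bits_Z (t : Z) : list nat := match t with Zpos p => bits_pos p | _ => [] end.

(* The accumulating loop inside [bits_pos]. *)
Fixpoint bits_acc (p : positive) (acc : list nat) : list nat :=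
  match p with
  | xH => 2%nat :: acc
  | xO p' => bits_acc p' (1%nat :: acc)
  | xI p' => bits_acc p' (2%nat :: acc)
  end.

Lemma bits_acc_app p acc : bits_acc p acc = bits_pos p ++ acc.
Proof.
  change (bits_pos p) with (bits_acc p []). revert acc.
  induction p as [p IH | p IH |]; intros acc; cbn; [| | reflexivity];
    rewrite IH, (IH [_]), <- app_assoc; reflexivity.
Qed.

Lemma bits_pos_xO p : bits_pos (xO p) = bits_pos p ++ [1%nat].
Proof. exact (bits_acc_app p [1%nat]). Qed.

Lemma bits_pos_xI p : bits_pos (xI p) = bits_pos p ++ [2%nat].
Proof. exact (bits_acc_app p [2%nat]). Qed.

Lemma bits_Z_double t b : 0 <= t -> 0 <= b <= 1 -> 0 < 2 * t + b ->
  bits_Z (2 * t + b) = bits_Z t ++ [(Z.to_nat b + 1)%nat].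
Proof.
  intros Ht Hb Hpos. destruct t as [| p | p]; [| | lia].
  - now replace b with 1 by lia.
  - destruct (Z.eq_dec b 0) as [-> | Hb1]; [| replace b with 1 by lia].
    + change (2 * Z.pos p + 0) with (Z.pos (xO p)). apply bits_pos_xO.
    + change (2 * Z.pos p + 1) with (Z.pos (xI p)). apply bits_pos_xI.
Qed.

Lemma enc_Z_split z :
  enc_Z z = (if z <? 0 then [3%nat] else []) ++ (if z =? 0 then [1%nat] else []) ++ bits_Z (Z.abs z).
Proof. now destruct z. Qed.

Lemma zsize_abs z : zsize (Z.abs z) = zsize z.
Proof. unfold zsize. now rewrite Z.abs_idemp. Qed.

Lemma zsize_pos t : 0 < t -> 0 < zsize t.
Proof. intros. unfold zsize. apply Z.log2_up_pos. lia. Qed.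

Lemma zsize_double t b : 0 <= t -> 0 <= b <= 1 -> 0 < 2 * t + b ->
  zsize (2 * t + b) = zsize t + 1.
Proof.
  intros Ht Hb Hpos. destruct (Z.eq_dec t 0) as [-> | Ht0].
  - now replace b with 1 by lia.
  - unfold zsize. rewrite !Z.abs_eq, !Z.log2_up_eqn by lia.
    replace (Z.pred (2 * t + b + 1)) with (2 * t + b) by lia.
    replace (Z.pred (t + 1)) with t by lia.
    destruct (Z.eq_dec b 0) as [-> | Hb1]; [| replace b with 1 by lia].
    + rewrite Z.add_0_r, Z.log2_double by lia. lia.
    + rewrite Z.log2_succ_double by lia. lia.
Qed.

(** * Writing the input onto the tape *)

Section Encoding.
Variables B cc : nat.

Definition encoded (l : list nat) (S : store) : Prop :=
  S reg_right = Some (VInt (from_digits (Z.of_nat B) l)) /\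
  S reg_pow = Some (VInt (2 ^ Z.of_nat (cc + length l))) /\ declared S.

Lemma encoded_upd l S x v :
  x <> reg_right -> x <> reg_pow -> encoded l S -> encoded l (upd S x v).
Proof.
  intros Hr Hp (HR & HP & Hdecl). split; [| split]; [now lookup .. | now apply declared_upd].
Qed.

Definition push_code (e : expr) : stmt :=
  SBlock [SAssign reg_right (eadd (emul_nat B (EVar reg_right)) e);
          SAssign reg_pow (eadd (EVar reg_pow) (EVar reg_pow))].

Definition pushed (s : nat) (l : list nat) (S : store) : store :=
  upd (upd S reg_right (VInt (from_digits (Z.of_nat B) (s :: l))))
      reg_pow (VInt (2 ^ Z.of_nat (cc + length (s :: l)))).

Lemma encoded_pushed s l S : encoded l S -> encoded (s :: l) (pushed s l S).
Proof.
  intros (_ & _ & Hdecl). unfold pushed.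
  split; [| split]; [now lookup .. | now repeat apply declared_upd].
Qed.

Lemma exec_push e s l S : eval S e (VInt (Z.of_nat s)) -> encoded l S ->
  exec S (push_code e) (pushed s l S).
Proof.
  intros He (HR & HP & Hdecl). apply X_Block.
  apply (XS_Cons _ _ _ (upd S reg_right (VInt (from_digits (Z.of_nat B) (s :: l))))).
  - apply exec_assign; [apply declared_reg; [exact Hdecl | lia] |].
    eapply eval_add; [eapply eval_mul_nat; [apply eval_var; exact HR | reflexivity] | exact He |].
    rewrite from_digits_cons. lia.
  - eapply XS_Cons; [| apply XS_Nil]. apply exec_assign; [now apply declared_upd; [| lia] |].
    eval_arith. cbn [length]. rewrite Nat.add_succ_r, Nat2Z.inj_succ, Z.pow_succ_r; lia.
Qed.

Lemma exec_push_if e b s l S : eval S e (VBool b) -> encoded l S ->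
  exists S', exec S (SIf e (push_code (ENum s)) (SBlock [])) S' /\
    encoded ((if b then [s] else []) ++ l) S' /\ agree_from 12 S S'.
Proof.
  intros He Hl. destruct b.
  - exists (pushed s l S). split; [| split].
    + apply X_IfT; [exact He |]. apply exec_push; [constructor | exact Hl].
    + now apply encoded_pushed.
    + intros v Hv. unfold pushed. now lookup.
  - exists S. split; [| split]; auto using agree_from_refl. apply X_IfF; [exact He | apply exec_skip].
Qed.

Definition bit_code : stmt :=
  SBlock [SAssign reg_digit (emod (EVar reg_bits) (ENum 2));
          SAssign reg_bits (ediv (EVar reg_bits) (ENum 2));
          push_code (eadd (EVar reg_digit) (ENum 1))].

Lemma exec_bits_loop n : forall t j i S l,
  Z.of_nat n = i - j -> i - j = zsize t -> 0 <= j -> 0 <= t ->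
  S reg_bits = Some (VInt t) -> encoded l S ->
  exists S', exec_loop (counter 0) bit_code j i S S' /\ encoded (bits_Z t ++ l) S' /\
    agree_from 13 S S'.
Proof.
  induction n as [|n IH]; intros t j i S l Hn Hsize Hj Ht HT Hl.
  - exists S. split; [constructor; lia | split; [| apply agree_from_refl]].
    destruct (Z.eq_dec t 0) as [-> | Ht0]; [exact Hl |].
    pose proof (zsize_pos t). lia.
  - pose proof (Z.mod_pos_bound t 2 ltac:(lia)) as Hmod.
    pose proof (Z.div_mod t 2 ltac:(lia)) as Hdivmod.
    assert (Ht0 : 0 < t)
      by (destruct (Z.eq_dec t 0) as [-> |]; [change (zsize 0) with 0 in Hsize |]; lia).
    set (S1 := upd (upd (upd S (counter 0) (VInt j)) reg_digit (VInt (t mod 2)))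
                   reg_bits (VInt (t / 2))).
    assert (Hl1 : encoded l S1) by (unfold S1; repeat (apply encoded_upd; [lia | lia |]); exact Hl).
    set (S2 := pushed (Z.to_nat (t mod 2) + 1) l S1).
    assert (Hpush : exec S1 (push_code (eadd (EVar reg_digit) (ENum 1))) S2)
      by (apply exec_push; [unfold S1; eval_arith; lia | exact Hl1]).
    rewrite Hdivmod in Hsize. rewrite zsize_double in Hsize by lia.
    destruct (IH (t / 2) (j + 1) i S2 (Z.to_nat (t mod 2) + 1 :: l)%nat)
      as (S3 & Hloop & Hl3 & Hagree3);
      [lia | lia | lia | apply Z.div_pos; lia | unfold S2, pushed, S1; now lookup |
       now apply encoded_pushed |].
    exists S3. split; [| split].
    + econstructor; [lia | | exact Hloop]. apply X_Block.
      destruct Hl as (_ & _ & Hdecl).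
      assign_seq. assign_seq. econstructor; [exact Hpush | constructor].
    + rewrite Hdivmod, bits_Z_double, <- app_assoc by lia. exact Hl3.
    + apply (agree_from_trans _ _ S2); [| exact Hagree3].
      intros v Hv. unfold S2, pushed, S1. now lookup.
Qed.

Definition encode_code (x : var) : list stmt :=
  [SAssign reg_bound (EVar x);
   SIf (elt (EVar x) (ENum 0))
     (SAssign reg_bits (esub (ENum 0) (EVar x))) (SAssign reg_bits (EVar x));
   SFor (counter 0) (EVar reg_bound) bit_code;
   SIf (eeq (EVar x) (ENum 0)) (push_code (ENum 1)) (SBlock []);
   SIf (elt (EVar x) (ENum 0)) (push_code (ENum 3)) (SBlock [])].

Lemma exec_encode x z l S : (13 <= x)%nat -> S x = Some (VInt z) -> encoded l S ->
  exists S', exec_seq S (encode_code x) S' /\ encoded (enc_Z z ++ l) S' /\ agree_from 13 S S'.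
Proof.
  intros Hx Hz Hl. pose proof Hl as (_ & _ & Hdecl).
  set (S1 := upd (upd S reg_bound (VInt z)) reg_bits (VInt (Z.abs z))).
  assert (Hsign : exec_seq S (firstn 2 (encode_code x)) S1).
  { cbn. assign_seq. eapply XS_Cons; [| apply XS_Nil].
    eapply exec_if; [eapply eval_ltb; [eval_arith | eval_arith | reflexivity] |].
    unfold S1. cbn [Z.of_nat]. destruct (Z.ltb_spec z 0); [| rewrite Z.abs_eq by lia]; assign. }
  destruct (exec_bits_loop (Z.to_nat (zsize z)) (Z.abs z) 0 (zsize z) S1 l)
    as (S2 & Hloop & Hl2 & Hagree2); try lia.
  { pose proof (zsize_nonneg z). lia. }
  { rewrite zsize_abs. lia. }
  { unfold S1. now lookup. }
  { unfold S1. repeat (apply encoded_upd; [lia | lia |]). exact Hl. }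
  assert (Hagree1 : agree_from 13 S S1) by (intros v Hv; unfold S1; now lookup).
  assert (Hz2 : S2 x = Some (VInt z)) by (rewrite Hagree2, Hagree1 by lia; exact Hz).
  assert (Hzero : eval S2 (eeq (EVar x) (ENum 0)) (VBool (z =? 0)))
    by (eapply eval_eqb; [eval_arith | eval_arith | reflexivity]).
  destruct (exec_push_if _ _ 1 _ _ Hzero Hl2) as (S3 & Hpush3 & Hl3 & Hagree3).
  assert (Hz3 : S3 x = Some (VInt z)) by (rewrite Hagree3 by lia; exact Hz2).
  assert (Hneg : eval S3 (elt (EVar x) (ENum 0)) (VBool (z <? 0)))
    by (eapply eval_ltb; [eval_arith | eval_arith | reflexivity]).
  destruct (exec_push_if _ _ 3 _ _ Hneg Hl3) as (S4 & Hpush4 & Hl4 & Hagree4).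
  exists S4. split; [| split].
  - change (encode_code x) with (firstn 2 (encode_code x) ++ skipn 2 (encode_code x)).
    eapply exec_seq_app; [exact Hsign |]. cbn.
    econstructor; [eapply exec_for_var; [unfold S1; now lookup | exact Hloop] |].
    econstructor; [exact Hpush3 |]. econstructor; [exact Hpush4 | constructor].
  - rewrite enc_Z_split, <- !app_assoc. exact Hl4.
  - apply (agree_from_trans _ _ S1); [exact Hagree1 |].
    apply (agree_from_trans _ _ S2); [exact Hagree2 |].
    apply (agree_from_trans _ _ S3); apply (agree_from_le 12); auto.
Qed.

(* Each digit is pushed in front of the tape, so the arguments are encoded from the last one. *)
Fixpoint encode_args (xs : list var) : list stmt :=
  match xs with
  | [] => []
  | [x] => encode_code x
  | x :: xs' => encode_args xs' ++ push_code (ENum 4) :: encode_code x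
  end.

Lemma exec_encode_args xs vs S l :
  Forall2 (fun x v => (13 <= x)%nat /\ S x = Some (VInt v)) xs vs -> encoded l S ->
  exists S', exec_seq S (encode_args xs) S' /\ encoded (enc_input vs ++ l) S' /\ agree_from 13 S S'.
Proof.
  revert vs S l. induction xs as [|x xs IH]; intros vs S l Hargs Hl;
    inversion Hargs as [| x' z xs' vs' [Hx Hz] Hargs']; subst.
  - exists S. split; [constructor | split; [exact Hl | apply agree_from_refl]].
  - destruct xs as [|x2 xs].
    + inversion Hargs'; subst. cbn. now apply exec_encode.
    + destruct (IH _ S l Hargs' Hl) as (S1 & Hexec1 & Hl1 & Hagree1).
      set (S2 := pushed 4 (enc_input vs' ++ l) S1).
      assert (Hexec2 : exec S1 (push_code (ENum 4)) S2)
        by (apply exec_push; [constructor | exact Hl1]).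
      destruct (exec_encode x z (4%nat :: enc_input vs' ++ l) S2) as (S3 & Hexec3 & Hl3 & Hagree3);
        [exact Hx | unfold S2, pushed; lookup; rewrite Hagree1 by lia; exact Hz |
         now apply encoded_pushed |].
      exists S3. split; [| split].
      * cbn [encode_args]. eapply exec_seq_app; [exact Hexec1 |].
        econstructor; [exact Hexec2 | exact Hexec3].
      * destruct vs' as [|v2 vs']; [inversion Hargs' |].
        change (enc_input (z :: v2 :: vs')) with (enc_Z z ++ 4%nat :: enc_input (v2 :: vs')).
        rewrite <- app_assoc. exact Hl3.
      * apply (agree_from_trans _ _ S1); [exact Hagree1 |].
        apply (agree_from_trans _ _ S2); [| exact Hagree3].
        intros v Hv. unfold S2, pushed. now lookup.
Qed.
End Encoding.

(** * Reading the output off the tape *)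

Record reader := mk_reader { rd_val : Z; rd_neg : bool; rd_done : bool }.

Definition reader_init : reader := mk_reader 0 false false.

Definition reader_result (r : reader) : Z := if rd_neg r then - rd_val r else rd_val r.

Definition read_digit (r : reader) (d : nat) : reader :=
  if rd_done r then r else
  match d with
  | O => mk_reader (rd_val r) (rd_neg r) true
  | 3%nat => mk_reader (rd_val r) true false
  | _ => mk_reader (2 * rd_val r + Z.of_nat d - 1) (rd_neg r) false
  end.

Lemma read_done l r : rd_done r = true -> fold_left read_digit l r = r.
Proof.
  intros Hr. induction l as [|d l IH]; [reflexivity |].
  cbn. unfold read_digit at 2. now rewrite Hr.
Qed.

Lemma read_nonzero_not_done l r : rd_done r = false -> (forall d, In d l -> d <> 0%nat) ->
  rd_done (fold_left read_digit l r) = false.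
Proof.
  revert r. induction l as [|d l IH]; intros r Hr Hl; [exact Hr |]. cbn. apply IH; [| firstorder].
  unfold read_digit. rewrite Hr. destruct d as [|[|[|[|d]]]]; try reflexivity.
  now destruct (Hl 0%nat (or_introl eq_refl)).
Qed.

Lemma read_bits_pos p neg :
  fold_left read_digit (bits_pos p) (mk_reader 0 neg false) = mk_reader (Z.pos p) neg false.
Proof.
  induction p as [p IH | p IH |]; [rewrite bits_pos_xI | rewrite bits_pos_xO | reflexivity];
    rewrite fold_left_app, IH; cbn; f_equal; lia.
Qed.

Lemma read_enc_Z z : reader_result (fold_left read_digit (enc_Z z) reader_init) = z.
Proof.
  destruct z as [| p | p]; [reflexivity | |]; unfold reader_init; cbn [enc_Z fold_left].
  - now rewrite read_bits_pos.
  - change (read_digit (mk_reader 0 false false) 3) with (mk_reader 0 true false).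
    now rewrite read_bits_pos.
Qed.

Lemma bits_pos_symbols p d : In d (bits_pos p) -> (1 <= d <= 2)%nat.
Proof.
  induction p as [p IH | p IH |]; [rewrite bits_pos_xI | rewrite bits_pos_xO | ];
    intros Hd; [apply in_app_or in Hd as [Hd | [<- | []]] .. | destruct Hd as [<- | []]]; auto; lia.
Qed.

Lemma enc_Z_symbols z d : In d (enc_Z z) -> (1 <= d <= 3)%nat.
Proof.
  destruct z as [| p | p]; cbn [enc_Z];
    [intros [<- | []]; lia | intros Hd | intros [<- | Hd]; [lia |]];
    apply bits_pos_symbols in Hd; lia.
Qed.

Lemma enc_input_symbols vs d : In d (enc_input vs) -> (1 <= d <= 4)%nat.
Proof.
  induction vs as [|v [|v' vs] IH]; cbn [enc_input]; intros Hd; [easy | |].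
  - apply enc_Z_symbols in Hd. lia.
  - apply in_app_or in Hd as [Hd | [<- | Hd]]; [apply enc_Z_symbols in Hd | | apply IH in Hd]; lia.
Qed.

Section Decoding.
Variable B : nat.

Definition read_prefix (N : Z) (n : nat) : reader :=
  fold_left read_digit (map (digit (Z.of_nat B) N) (seq 0 n)) reader_init.

Lemma read_prefix_S N n : read_prefix N (S n) = read_digit (read_prefix N n) (digit (Z.of_nat B) N n).
Proof. unfold read_prefix. now rewrite seq_S, map_app, fold_left_app. Qed.

Definition digit_code : stmt :=
  SIf (eeq (EVar reg_digit) (ENum 0)) (SAssign reg_done (ENum 1))
    (SIf (eeq (EVar reg_digit) (ENum 3)) (SAssign reg_neg (ENum 1))
       (SAssign reg_val
          (esub (eadd (eadd (EVar reg_val) (EVar reg_val)) (EVar reg_digit)) (ENum 1)))).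

Definition decode_body : stmt :=
  SIf (eeq (EVar reg_done) (ENum 0))
    (SBlock [SAssign reg_digit (emod (EVar reg_right) (ENum B));
             SAssign reg_right (ediv (EVar reg_right) (ENum B));
             digit_code])
    (SBlock []).

Definition holds_reader (r : reader) (S : store) : Prop :=
  S reg_val = Some (VInt (rd_val r)) /\ S reg_neg = Some (VInt (Z.b2z (rd_neg r))) /\
  S reg_done = Some (VInt (Z.b2z (rd_done r))).

Lemma exec_digit_code S r d : rd_done r = false -> holds_reader r S -> declared S ->
  S reg_digit = Some (VInt (Z.of_nat d)) ->
  exists S', exec S digit_code S' /\ holds_reader (read_digit r d) S' /\
    S' reg_right = S reg_right /\ declared S'.
Proof.
  intros Hr (HV & HNG & HDN) Hdecl Hd. unfold read_digit. rewrite Hr in *.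
  destruct (Nat.eq_dec d 0) as [-> | Hd0]; [| destruct (Nat.eq_dec d 3) as [-> | Hd3]].
  - exists (upd S reg_done (VInt 1)). split.
    + eapply exec_if; [eapply eval_eqb; [eval_arith | eval_arith | reflexivity] | cbn; assign].
    + split; [split; [| split] | split]; try (now lookup). now apply declared_upd.
  - exists (upd S reg_neg (VInt 1)). split.
    + eapply exec_if; [eapply eval_eqb; [eval_arith | eval_arith | reflexivity] | cbn].
      eapply exec_if; [eapply eval_eqb; [eval_arith | eval_arith | reflexivity] | cbn; assign].
    + split; [split; [| split] | split]; try (now lookup). now apply declared_upd.
  - exists (upd S reg_val (VInt (2 * rd_val r + Z.of_nat d - 1))). split.
    + eapply exec_if; [eapply eval_eqb; [eval_arith | eval_arith | reflexivity] |].
      rewrite (proj2 (Z.eqb_neq _ _)) by lia.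
      eapply exec_if; [eapply eval_eqb; [eval_arith | eval_arith | reflexivity] |].
      rewrite (proj2 (Z.eqb_neq _ _)) by lia. assign.
    + replace (match d with O => _ | _ => _ end) with
        (mk_reader (2 * rd_val r + Z.of_nat d - 1) (rd_neg r) false)
        by (destruct d as [|[|[|[|d]]]]; easy).
      split; [split; [| split] | split]; try (now lookup). now apply declared_upd.
Qed.

(* Until the blank is reached, [reg_right] holds the digits of [N] not read yet. *)
Definition decoding (N : Z) (n : nat) (S : store) : Prop :=
  holds_reader (read_prefix N n) S /\
  (rd_done (read_prefix N n) = false -> S reg_right = Some (VInt (N / Z.of_nat B ^ Z.of_nat n))) /\
  declared S.

Lemma decoding_upd N n S x v : (12 <= x)%nat -> decoding N n S -> decoding N n (upd S x v).
Proof.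
  intros Hx ((HV & HNG & HDN) & HR & Hdecl).
  split; [split; [| split] | split; [intros Hr | now apply declared_upd]]; lookup; auto.
Qed.

Lemma exec_decode_body N n St : (0 < B)%nat -> 0 <= N -> decoding N n St ->
  exists St', exec St decode_body St' /\ decoding N (S n) St'.
Proof.
  intros HB HN ((HV & HNG & HDN) & HR & Hdecl).
  unfold decoding. rewrite read_prefix_S.
  destruct (rd_done (read_prefix N n)) eqn:Hdone.
  - exists St. unfold read_digit. rewrite Hdone. split.
    + eapply exec_if; [eapply eval_eqb; [eval_arith | eval_arith | reflexivity] | apply exec_skip].
    + split; [| split]; [split; [| split] | rewrite Hdone; discriminate | exact Hdecl];
        rewrite ?Hdone; assumption.
  - specialize (HR eq_refl).
    set (Q := N / Z.of_nat B ^ Z.of_nat n) in *.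
    assert (HQ : 0 <= Q) by (apply Z.div_pos; [lia | apply Z.pow_pos_nonneg; lia]).
    pose proof (Z.mod_pos_bound Q (Z.of_nat B) ltac:(lia)).
    set (d := digit (Z.of_nat B) N n).
    assert (Hd : Z.of_nat d = Q mod Z.of_nat B)
      by (unfold d; rewrite digit_spec, Z2Nat.id by (try apply Z.mod_pos_bound; lia); reflexivity).
    set (S1 := upd (upd St reg_digit (VInt (Z.of_nat d))) reg_right (VInt (Q / Z.of_nat B))).
    destruct (exec_digit_code S1 (read_prefix N n) d) as (S2 & Hexec & Hreader & HR2 & Hdecl2);
      [exact Hdone | unfold S1; split; [| split]; lookup; rewrite ?Hdone; assumption |
       now repeat apply declared_upd |
       unfold S1; now lookup |].
    exists S2. split; [| split; [exact Hreader | split; [intros _ | exact Hdecl2]]].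
    + eapply exec_if; [eapply eval_eqb; [eval_arith | eval_arith | reflexivity] | cbn].
      apply X_Block.
      apply (XS_Cons _ _ _ (upd St reg_digit (VInt (Z.of_nat d)))); [rewrite Hd; assign |].
      apply (XS_Cons _ _ _ S1); [unfold S1; assign |]. econstructor; [exact Hexec | constructor].
    + rewrite HR2. unfold S1. lookup. unfold Q.
      assert (0 < Z.of_nat B ^ Z.of_nat n) by (apply Z.pow_pos_nonneg; lia).
      rewrite Z.div_div, Nat2Z.inj_succ, Z.pow_succ_r, (Z.mul_comm (Z.of_nat B)) by lia.
      reflexivity.
Qed.

Definition decode_code : list stmt :=
  [SAssign reg_bound (EVar reg_right);
   SAssign reg_val (ENum 0); SAssign reg_neg (ENum 0); SAssign reg_done (ENum 0);
   SFor (counter 0) (EVar reg_bound) decode_body;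
   SIf (eeq (EVar reg_neg) (ENum 1)) (SAssign reg_out (esub (ENum 0) (EVar reg_val)))
     (SAssign reg_out (EVar reg_val))].

Section Output.
Variables (N : Z) (e : list nat).
Hypothesis HN : 0 <= N.
Hypothesis He : forall j, (j < length e)%nat -> digit (Z.of_nat B) N j = nth j e 0%nat.
Hypothesis Hend : digit (Z.of_nat B) N (length e) = 0%nat.
Hypothesis Hnonzero : forall d, In d e -> d <> 0%nat.

Lemma read_prefix_output n : (length e <= n)%nat ->
  reader_result (read_prefix N n) = reader_result (fold_left read_digit e reader_init).
Proof.
  intros Hn. unfold read_prefix.
  replace n with (length e + (n - length e))%nat by lia.
  rewrite seq_app, map_app, fold_left_app.
  replace (map (digit (Z.of_nat B) N) (seq 0 (length e))) with e.
  2:{ apply nth_ext with 0%nat 0%nat; rewrite ?length_map, ?length_seq; [reflexivity |].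
      intros j Hj. rewrite <- He by exact Hj.
      rewrite (nth_indep _ _ (digit (Z.of_nat B) N 0)), map_nth, seq_nth
        by (rewrite ?length_map, ?length_seq; lia).
      reflexivity. }
  destruct (n - length e)%nat as [|k]; [reflexivity |].
  rewrite <- cons_seq. cbn [map fold_left]. rewrite Nat.add_0_l, Hend.
  unfold read_digit at 2. rewrite read_nonzero_not_done by (reflexivity || exact Hnonzero).
  now rewrite read_done.
Qed.

Lemma output_length_le_size : (1 < B)%nat -> (length e <= Z.to_nat (zsize N))%nat.
Proof.
  intros HB. destruct (length e) as [|l] eqn:Hl; [lia |].
  assert (Hdigit : digit (Z.of_nat B) N l <> 0%nat)
    by (rewrite He by lia; apply Hnonzero, nth_In; lia).
  pose proof (digit_nonzero_le (Z.of_nat B) N l ltac:(lia) HN Hdigit) as Hpow.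
  assert (2 ^ Z.of_nat l <= Z.of_nat B ^ Z.of_nat l) by (apply Z.pow_le_mono_l; lia).
  unfold zsize. rewrite Z.abs_eq by lia.
  destruct (Z.le_gt_cases (Z.log2_up (N + 1)) (Z.of_nat l)) as [Hle | Hgt]; [| lia].
  apply Z.log2_up_le_pow2 in Hle; lia.
Qed.

Lemma exec_decode St : (1 < B)%nat -> declared St -> St reg_right = Some (VInt N) ->
  exists S', exec_seq St decode_code S' /\
    S' reg_out = Some (VInt (reader_result (fold_left read_digit e reader_init))).
Proof.
  intros HB Hdecl HR.
  set (S1 := upd (upd (upd (upd St reg_bound (VInt N)) reg_val (VInt 0)) reg_neg (VInt 0))
                 reg_done (VInt 0)).
  assert (Hdecoding1 : decoding N 0 S1).
  { split; [split; [| split] | split; [intros _ | now repeat apply declared_upd]];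
      unfold S1; lookup; try reflexivity.
    now rewrite Z.div_1_r. }
  destruct (exec_for_inv S1 (counter 0) reg_bound decode_body N
              (fun j St' => decoding N (Z.to_nat j) St'))
    as (S2 & Hloop & (HV & HNG & _) & _ & Hdecl2);
    [unfold S1; now lookup | exact Hdecoding1 | |].
  { intros j St' Hj Hdec. replace (Z.to_nat (j + 1)) with (S (Z.to_nat j)) by lia.
    apply exec_decode_body; [lia | exact HN |]. apply decoding_upd; [lia | exact Hdec]. }
  rewrite <- (read_prefix_output _ (output_length_le_size HB)).
  set (r := read_prefix N (Z.to_nat (zsize N))) in *.
  exists (upd S2 reg_out (VInt (reader_result r))). split; [| apply upd_eq].
  unfold decode_code. unfold S1 in Hloop. assign_seq. assign_seq. assign_seq. assign_seq.
  econstructor; [exact Hloop |]. econstructor; [| constructor].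
  eapply exec_if; [eapply eval_eqb; [eval_arith | eval_arith | reflexivity] |].
  unfold reader_result. destruct (rd_neg r); cbn; assign.
Qed.

End Output.
End Decoding.


(** * The simulating program *)

Definition declarations : list stmt :=
  map (fun v => SDecl TInt v) (seq 0 11) ++ [SDecl TIint reg_bound].

Definition simulation_code (M : TM) (k : nat) : list stmt :=
  [SAssign reg_state (ENum (start M)); SAssign reg_left (ENum 0);
   SAssign reg_bound (EVar reg_pow); nested_loops (S k) (step_code M)].

Definition prologue_code (c : nat) : list stmt := declarations ++ [SAssign reg_pow (ENum (2 ^ c))].

Definition tm_program (M : TM) (c k m : nat) : program :=
  mkProgram (seq (13 + k) m)
    (prologue_code c ++ encode_args (nsymbols M) (seq (13 + k) m)
       ++ simulation_code M k ++ decode_code (nsymbols M))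
    (EVar reg_out).

Lemma exec_decl_ints l S : exists S', exec_seq S (map (fun v => SDecl TInt v) l) S' /\
  forall v, S' v = if in_dec Nat.eq_dec v l then Some (VInt 0) else S v.
Proof.
  revert S. induction l as [|x l IH]; intros S.
  - exists S. split; [constructor | reflexivity].
  - destruct (IH (upd S x (VInt 0))) as (S' & Hexec & HS').
    exists S'. split; [econstructor; [constructor | exact Hexec] |].
    intros v. rewrite HS'. unfold upd.
    destruct (in_dec Nat.eq_dec v l), (in_dec Nat.eq_dec v (x :: l)), (Nat.eqb_spec v x);
      subst; cbn in *; intuition congruence.
Qed.

Lemma exec_declarations S : exists S', exec_seq S declarations S' /\
  (forall v, (v < 12)%nat -> S' v = Some (VInt 0)) /\ agree_from 12 S S'.
Proof.
  destruct (exec_decl_ints (seq 0 11) S) as (S1 & Hexec & HS1).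
  exists (upd S1 reg_bound (VInt 0)). split; [| split].
  - eapply exec_seq_app; [exact Hexec |]. econstructor; constructor.
  - intros v Hv. destruct (Nat.eq_dec v reg_bound) as [-> | Hv']; [apply upd_eq |].
    lookup. rewrite HS1. destruct (in_dec _ _ _) as [| Hnotin]; [reflexivity |].
    exfalso. apply Hnotin, in_seq. lia.
  - intros v Hv. lookup. rewrite HS1. destruct (in_dec _ _ _) as [Hin |]; [| reflexivity].
    apply in_seq in Hin. lia.
Qed.

Lemma init_store_seq a m vs : length vs = m ->
  Forall2 (fun x v => (a <= x)%nat /\ init_store (seq a m) vs x = Some (VInt v)) (seq a m) vs.
Proof.
  revert a vs. induction m as [|m IH]; intros a [|v vs] Hlen; cbn in Hlen; try lia; constructor.
  - split; [lia | apply upd_eq].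
  - specialize (IH (S a) vs ltac:(lia)). revert IH. apply Forall2_impl.
    intros x z [Hx Hz]. split; [lia |]. unfold init_store in *. cbn. now lookup.
Qed.

Lemma exec_prologue B c a m vs : length vs = m -> (13 <= a)%nat ->
  exists S, exec_seq (init_store (seq a m) vs) (prologue_code c) S /\
    encoded B c [] S /\ Forall2 (fun x v => (13 <= x)%nat /\ S x = Some (VInt v)) (seq a m) vs.
Proof.
  intros Hlen Ha.
  destruct (exec_declarations (init_store (seq a m) vs)) as (S1 & Hexec & Hzero & Hagree).
  assert (Hdecl : declared S1) by (intros v Hv; now rewrite Hzero).
  exists (upd S1 reg_pow (VInt (2 ^ Z.of_nat (c + length (@nil nat))))). split; [| split].
  - eapply exec_seq_app; [exact Hexec |]. econstructor; [| constructor].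
    apply exec_assign; [apply declared_reg; [exact Hdecl | lia] |].
    apply eval_num. now rewrite Nat.add_0_r, Nat2Z.inj_pow.
  - split; [| split];
      [lookup; rewrite Hzero by lia; reflexivity | apply upd_eq | now apply declared_upd].
  - eapply Forall2_impl; [| exact (init_store_seq a m vs Hlen)].
    intros x v [Hx Hv]. split; [lia |]. lookup. now rewrite Hagree by lia.
Qed.

Lemma exec_simulation M c k w St0 t : TM_wf M ->
  encoded (nsymbols M) c w St0 -> (forall d, In d w -> (1 <= d <= 4)%nat) ->
  (t <= c * (length w + 1) ^ k)%nat -> step M (run M t (init_config M w)) = None ->
  exists S', exec_seq St0 (simulation_code M k) S' /\ simulates M (run M t (init_config M w)) S'.
Proof.
  intros Hwf (HR & HP & Hdecl) Hw Ht Hhalt. pose proof Hwf as [HB [Hstart _]].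
  set (y := 2 ^ Z.of_nat (c + length w)) in HP.
  set (S1 := upd (upd (upd St0 reg_state (VInt (Z.of_nat (start M)))) reg_left (VInt 0))
                 reg_bound (VInt y)).
  set (I := fun N St => simulates M (Nat.iter N (next_config M) (init_config M w)) St /\
                        St reg_bound = Some (VInt y)).
  assert (HI1 : I 0%nat S1).
  { split; [| apply upd_eq].
    apply (Simulates M _ _ 0 (from_digits (Z.of_nat (nsymbols M)) w)); unfold S1; try (now lookup);
      cbn; [apply from_digits_nonneg; lia | | now repeat apply declared_upd].
    apply tape_rep_init. intros d Hd. specialize (Hw d Hd). lia. }
  destruct (exec_nested_loops I (step_code M) y) with (n := S k) (N := 0%nat) (St := S1)
    as (S2 & Hexec & [Hsim _]); [| | | exact HI1 |].
  - now intros N St [_ Hy].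
  - intros N St j v [Hsim Hy]. split; [apply simulates_upd; [lia | exact Hsim] | now lookup].
  - intros N St [Hsim Hy].
    destruct (exec_step_code M _ St Hwf Hsim) as (St' & Hexec & Hsim' & Hagree).
    exists St'. rewrite Nat.add_1_r.
    split; [exact Hexec | split; [exact Hsim' | now rewrite Hagree by lia]].
  - exists S2. split.
    + unfold S1 in Hexec. cbn [simulation_code]. assign_seq. assign_seq. assign_seq.
      econstructor; [exact Hexec | constructor].
    + assert (Hclock : Z.to_nat (zsize y) = (c + length w + 1)%nat)
        by (unfold y; rewrite zsize_pow2; lia).
      rewrite Hclock, Nat.add_0_l, (iter_next_config_run M _ t) in Hsim; [exact Hsim | | exact Hhalt].
      eapply Nat.le_trans; [exact Ht | apply poly_time_le].
Qed.

Lemma output_digits B c e L R : tape_rep B (ctape c) (cpos c) L R -> output_is c e ->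
  (forall j, (j < length e)%nat -> digit B R j = nth j e 0%nat) /\ digit B R (length e) = 0%nat.
Proof.
  intros Htape [Hout Hend]. split.
  - intros j Hj. rewrite <- Hout by exact Hj. symmetry. apply Htape.
  - rewrite <- Hend. symmetry. apply Htape.
Qed.

Lemma tm_program_computes M c k m f : TM_wf M ->
  (forall vs, length vs = m -> exists t, (t <= c * (length (enc_input vs) + 1) ^ k)%nat /\
     step M (run M t (init_config M (enc_input vs))) = None /\
     output_is (run M t (init_config M (enc_input vs))) (enc_Z (f vs))) ->
  prog_computes (tm_program M c k m) m f.
Proof.
  intros Hwf Hfp. pose proof Hwf as [HB _].
  split; [apply length_seq |]. intros vs Hlen.
  destruct (Hfp vs Hlen) as (t & Ht & Hhalt & Hout).
  destruct (exec_prologue (nsymbols M) c (13 + k) m vs Hlen ltac:(lia))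
    as (S1 & Hexec1 & Hl1 & Hargs).
  destruct (exec_encode_args (nsymbols M) c _ _ S1 [] Hargs Hl1)
    as (S2 & Hexec2 & Hl2 & _).
  rewrite app_nil_r in Hl2.
  destruct (exec_simulation M c k _ S2 t Hwf Hl2 (enc_input_symbols vs) Ht Hhalt)
    as (S3 & Hexec3 & [L R _ _ HR _ HR0 Htape _ Hdecl]).
  destruct (output_digits _ _ _ L R Htape Hout) as [Hdigits Hend].
  destruct (exec_decode (nsymbols M) R (enc_Z (f vs)) HR0 Hdigits Hend
              (fun d Hd => ltac:(apply enc_Z_symbols in Hd; lia)) S3 ltac:(lia) Hdecl HR)
    as (S4 & Hexec4 & Hout4).
  exists S4. split.
  - cbn [body tm_program].
    eapply exec_seq_app; [exact Hexec1 |]. eapply exec_seq_app; [exact Hexec2 |].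
    eapply exec_seq_app; [exact Hexec3 | exact Hexec4].
  - cbn [ret tm_program]. rewrite read_enc_Z in Hout4. now apply eval_var.
Qed.

Definition reg_env (G : tenv) : Prop :=
  (forall v, (v < 11)%nat -> G v = Some TInt) /\ G reg_bound = Some TIint.

Lemma reg_env_upd G x t : (12 <= x)%nat -> reg_env G -> reg_env (upd G x t).
Proof. intros Hx [Hint Hbound]. split; [intros v Hv |]; lookup; auto. Qed.

Lemma int_typed_reg G v : reg_env G -> (v < 11)%nat -> int_typed G (EVar v).
Proof. intros [Hint _] Hv. eapply int_typed_var; [now apply Hint | now right]. Qed.

Ltac typecheck := repeat first
  [ apply int_typed_add | apply int_typed_sub | apply int_typed_div | apply int_typed_mod
  | apply int_typed_mul_nat | apply int_typed_num
  | apply bool_typed_eq | apply bool_typed_lt | apply bool_typed_and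
  | apply stmt_ty_skip | apply stmt_ty_if
  | apply stmt_ty_block; repeat apply Forall_cons; try apply Forall_nil
  | apply stmt_ty_assign; [match goal with H : reg_env _ |- _ => apply (proj1 H); lia end |]
  | apply int_typed_reg; [assumption | lia]
  | assumption ].

Lemma step_code_ty M G : reg_env G -> stmt_ty G true (step_code M) G.
Proof.
  intros HG.
  unfold step_code. typecheck.
  induction (list_prod (seq 0 (nstates M)) (seq 0 (nsymbols M))) as [| [q a] l IH]; cbn; typecheck.
  unfold action_code. destruct (delta M q a) as [[[q' a'] [| |]] |]; cbn; typecheck.
Qed.

Lemma nested_loops_ty s : (forall G, reg_env G -> stmt_ty G true s G) ->
  forall n G l, reg_env G -> (forall j, (j <= n)%nat -> G (counter j) = None) ->
  stmt_ty G l (nested_loops (S n) s) G.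
Proof.
  intros Hs n. induction n as [|n IH]; intros G l HG Hfree; cbn [nested_loops];
    (eapply stmt_ty_for; [apply HG | apply Hfree; lia |]).
  - apply Hs. apply reg_env_upd; [lia | exact HG].
  - apply IH; [apply reg_env_upd; [lia | exact HG] |]. intros j Hj. lookup. apply Hfree. lia.
Qed.

Section EncodingTyping.
Variables (B : nat) (G : tenv).
Hypothesis HG : reg_env G.

Lemma push_code_ty l e : int_typed G e -> stmt_ty G l (push_code B e) G.
Proof. intros. unfold push_code. typecheck. Qed.

Lemma encode_code_ty x : G x = Some TInt -> G (counter 0) = None ->
  Forall (fun s => stmt_ty G false s G) (encode_code B x).
Proof.
  intros Hx Hfree. assert (int_typed G (EVar x)) by (eapply int_typed_var; [exact Hx | now right]).
  unfold encode_code. repeat apply Forall_cons; try apply Forall_nil.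
  - apply stmt_ty_assign_iint; [apply HG | assumption].
  - typecheck; apply stmt_ty_assign; auto; apply (proj1 HG); lia.
  - eapply stmt_ty_for; [apply HG | exact Hfree |].
    pose proof (reg_env_upd G (counter 0) TIint (le_n _) HG). unfold bit_code. typecheck.
  - typecheck; auto using push_code_ty, int_typed_num.
  - typecheck; auto using push_code_ty, int_typed_num.
Qed.

Lemma encode_args_ty xs : (forall x, In x xs -> G x = Some TInt) -> G (counter 0) = None ->
  Forall (fun s => stmt_ty G false s G) (encode_args B xs).
Proof.
  intros Hxs Hfree. induction xs as [|x [|x2 xs] IH]; cbn [encode_args].
  - constructor.
  - apply encode_code_ty; [apply Hxs; now left | exact Hfree].
  - apply Forall_app. split; [apply IH; intros; apply Hxs; now right |].
    constructor; [apply push_code_ty, int_typed_num |].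
    apply encode_code_ty; [apply Hxs; now left | exact Hfree].
Qed.

Lemma decode_code_ty : G (counter 0) = None -> Forall (fun s => stmt_ty G false s G) (decode_code B).
Proof.
  intros Hfree. unfold decode_code.
  repeat apply Forall_cons; try apply Forall_nil; try (typecheck; fail).
  - apply stmt_ty_assign_iint; [apply HG | typecheck].
  - eapply stmt_ty_for; [apply HG | exact Hfree |].
    pose proof (reg_env_upd G (counter 0) TIint (le_n _) HG).
    unfold decode_body, digit_code. typecheck.
Qed.

End EncodingTyping.

Lemma fold_upd_lookup (l : list var) (t : ty) (G : tenv) x :
  fold_left (fun G v => upd G v t) l G x = if in_dec Nat.eq_dec x l then Some t else G x.
Proof.
  revert G. induction l as [|v l IH]; intros G; [reflexivity |].
  cbn [fold_left]. rewrite IH. unfold upd.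
  destruct (in_dec Nat.eq_dec x (v :: l)) as [Hin | Hnotin], (in_dec Nat.eq_dec x l); try reflexivity.
  - destruct Hin as [-> | Hin]; [now rewrite Nat.eqb_refl | contradiction].
  - exfalso. apply Hnotin. now right.
  - destruct (Nat.eqb_spec x v) as [-> | _]; [exfalso; apply Hnotin; now left | reflexivity].
Qed.

Lemma init_env_lookup xs x : init_env xs x = if in_dec Nat.eq_dec x xs then Some TInt else None.
Proof.
  induction xs as [|v xs IH]; [reflexivity |].
  change (init_env (v :: xs)) with (upd (init_env xs) v TInt).
  unfold upd. rewrite IH.
  destruct (in_dec Nat.eq_dec x (v :: xs)) as [Hin | Hnotin], (Nat.eqb_spec x v) as [-> | Hxv];
    try reflexivity.
  - destruct (in_dec Nat.eq_dec x xs); [reflexivity |]. destruct Hin as [-> | Hin]; contradiction.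
  - exfalso. apply Hnotin. now left.
  - destruct (in_dec Nat.eq_dec x xs); [exfalso; apply Hnotin; now right | reflexivity].
Qed.

Lemma seq_ty_decl_ints l G : NoDup l -> (forall v, In v l -> G v = None) ->
  seq_ty G false (map (fun v => SDecl TInt v) l) (fold_left (fun G v => upd G v TInt) l G).
Proof.
  revert G. induction l as [|v l IH]; intros G Hnodup Hfree; [constructor |].
  inversion Hnodup as [| ? ? Hv Hnodup']; subst. econstructor.
  - apply TS_Decl; [apply Hfree; now left | intros [H _]; discriminate].
  - apply IH; [exact Hnodup' |]. intros x Hx.
    rewrite upd_neq; [apply Hfree; now right | intros ->; contradiction].
Qed.

Definition program_env (k m : nat) : tenv :=
  upd (fold_left (fun G v => upd G v TInt) (seq 0 11) (init_env (seq (13 + k) m))) reg_bound TIint.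

Lemma init_env_below a m v : (v < a)%nat -> init_env (seq a m) v = None.
Proof.
  intros Hv. rewrite init_env_lookup. destruct (in_dec _ _ _) as [Hin |]; [| reflexivity].
  apply in_seq in Hin. lia.
Qed.

Lemma program_env_regs k m : reg_env (program_env k m).
Proof.
  split; [intros v Hv |]; unfold program_env; lookup; [| reflexivity].
  rewrite fold_upd_lookup. destruct (in_dec _ _ _) as [| Hnotin]; [reflexivity |].
  exfalso. apply Hnotin, in_seq. lia.
Qed.

Lemma program_env_params k m x : In x (seq (13 + k) m) -> program_env k m x = Some TInt.
Proof.
  intros Hx. pose proof Hx as Hx'. apply in_seq in Hx'. unfold program_env. lookup.
  rewrite fold_upd_lookup, init_env_lookup.
  destruct (in_dec _ x (seq 0 11)); [reflexivity |]. now destruct (in_dec _ _ _).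
Qed.

Lemma program_env_counters k m j : (j <= k)%nat -> program_env k m (counter j) = None.
Proof.
  intros Hj. unfold program_env. lookup. rewrite fold_upd_lookup.
  destruct (in_dec _ _ _) as [Hin |]; [apply in_seq in Hin; lia | apply init_env_below; lia].
Qed.

Lemma seq_ty_declarations k m :
  seq_ty (init_env (seq (13 + k) m)) false declarations (program_env k m).
Proof.
  eapply seq_ty_app.
  - apply seq_ty_decl_ints; [apply seq_NoDup |].
    intros v Hv. apply in_seq in Hv. apply init_env_below. lia.
  - econstructor; [constructor; [| intros [? _]; discriminate] | constructor].
    rewrite fold_upd_lookup. destruct (in_dec _ _ _) as [Hin |]; [apply in_seq in Hin; lia |].
    apply init_env_below. lia.
Qed.

Lemma tm_program_well_typed M c k m : well_typed (tm_program M c k m).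
Proof.
  pose proof (program_env_regs k m) as HG.
  split; [apply seq_NoDup |]. exists (program_env k m). split.
  - cbn [body tm_program params]. unfold prologue_code. rewrite <- !app_assoc.
    eapply seq_ty_app; [apply seq_ty_declarations | apply seq_ty_invariant].
    apply Forall_app; split; [constructor; [typecheck | constructor] |].
    apply Forall_app; split;
      [apply encode_args_ty;
         [exact HG | apply program_env_params | apply program_env_counters; lia] |].
    apply Forall_app; split; [| apply decode_code_ty; [exact HG | apply program_env_counters; lia]].
    unfold simulation_code. repeat apply Forall_cons; try apply Forall_nil; try (typecheck; fail).
    + apply stmt_ty_assign_iint; [apply HG | typecheck].
    + apply nested_loops_ty; [exact (step_code_ty M) | exact HG | apply program_env_counters].
  - exists TInt. split; [constructor; apply HG; lia | now right].
Qed.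

Theorem theorem4 : forall (m : nat) (f : list Z -> Z), in_FP m f -> in_FPC m f.
Proof.
  intros m f (M & c & k & Hwf & Hfp).
  exists (tm_program M c k m). split; [apply tm_program_well_typed |].
  apply tm_program_computes; [exact Hwf |]. intros vs Hlen.
  destruct (Hfp vs Hlen) as (t & Ht & Hhalt & Hout). now exists t.
Qed.
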